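(* Under the isomorphism $\iota$ of Lemma 3.1, the image of $\mathcal C^+(\mathrm{II}_{2,10})$ is $M_4(\mathcal C^+(-\mathbb O(\mathbb Z)))$.
   Context: Clifford algebras: for a real quadratic space $(W,q)$, $(a,b)=q(a+b)-q(a)-q(b)$, $\mathcal C(W)$ is generated by $W$ with $ab+ba=(a,b)$, $\mathcal C^+(W)$ its even part; for a lattice $L\subset W$, $\mathcal C^+(L)$ is the subring generated by all products $ab$, $a,b\in L$. $V=\mathbb R^{12}$ with basis $h_1,\dots,h_4,e_0,\dots,e_7$, $(h_1,h_2)=(h_3,h_4)=1$, other pairings among the $h_i$ zero, $(h_i,e_k)=0$, $(e_k,e_l)=-2\delta_{kl}$, $q(x)=(x,x)/2$. $V_0=\sum\mathbb Re_k$ is identified with the octaves $\mathbb O=\mathbb R^8$ (standard basis $e_0,\dots,e_7$) with quadratic form $-N$, $N(x)=\sum x_k^2$. Integral octaves $\mathbb O(\mathbb Z)=\sum\mathbb Zf_i$ with $f_0=e_0,f_1=e_1,f_2=e_2,f_3=e_3$, $f_4=\frac12(e_1+e_2+e_3-e_4)$, $f_5=\frac12(-e_0-e_1-e_4+e_5)$, $f_6=\frac12(-e_0+e_1-e_2+e_6)$, $f_7=\frac12(-e_0+e_2+e_4+e_7)$; $-\mathbb O(\mathbb Z)$ denotes this lattice in $V_0$. $\mathrm{II}_{2,10}=\mathbb Zh_1+\mathbb Zh_2+\mathbb Zh_3+\mathbb Zh_4+\mathbb O(\mathbb Z)\subset V$. $\iota:\mathcal C(V)\to M_4(\mathcal C(V_0))$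 is the algebra isomorphism with $\iota(h_1)=e_0(E_{12}+E_{43})$, $\iota(h_2)=e_0(-E_{21}-E_{34})$, $\iota(h_3)=e_0(E_{14}-E_{23})$, $\iota(h_4)=e_0(E_{32}-E_{41})$, $\iota(e_0)=e_0\mathrm{diag}(-1,1,-1,1)$, $\iota(e_i)=e_iE_4$ ($1\le i\le7$), $E_{kl}$ the matrix units. *)

From HB Require Import structures.
From mathcomp Require Import all_boot all_order all_algebra.
Set Implicit Arguments. Unset Strict Implicit. Unset Printing Implicit Defensive.
Import Order.TTheory GRing.Theory Num.Theory.
Local Open Scope ring_scope.

Section Cliff.
Variable R : realFieldType.

(* An element is the family of its coordinates on the monomial basis
   e_S = e_{i_1} ... e_{i_k}  (i_1 < ... < i_k, S = {i_1,...,i_k}).            *)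
Definition cl := {ffun {set 'I_8} -> R}.

Definition cl_one : cl := [ffun S => (S == set0)%:R].

(* sign of e_S e_T = sign * e_{S Δ T}: one factor -1 per inversion, one factor
   e_k^2 = -1 per common index. *)
Definition cl_sign (S T : {set 'I_8}) : R :=
  (-1) ^+ (#|[set p : 'I_8 * 'I_8 | [&& p.1 \in S, p.2 \in T & (p.2 < p.1)%N]]|
           + #|S :&: T|).

Definition cl_mul (x y : cl) : cl :=
  [ffun U => \sum_(S : {set 'I_8}) \sum_(T : {set 'I_8} | (S :\: T) :|: (T :\: S) == U)
               cl_sign S T * x S * y T].

Definition cl_scale (c : R) (x : cl) : cl := [ffun S => c * x S].

Definition cl_gen (k : nat) : cl := [ffun S => (S == [set (inord k : 'I_8)])%:R].

Definition cl_vec (v : 'rV[R]_8) : cl :=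
  [ffun S => \sum_(k : 'I_8) (if S == [set k] then v 0 k else 0)].

(* twice the coordinates of f_i on e_0,...,e_7 *)
Definition fcoef2 : seq (seq int) :=
  [:: [:: 2; 0; 0; 0; 0; 0; 0; 0];
      [:: 0; 2; 0; 0; 0; 0; 0; 0];
      [:: 0; 0; 2; 0; 0; 0; 0; 0];
      [:: 0; 0; 0; 2; 0; 0; 0; 0];
      [:: 0; 1; 1; 1; -1; 0; 0; 0];
      [:: -1; -1; 0; 0; -1; 1; 0; 0];
      [:: -1; 1; -1; 0; 0; 0; 1; 0];
      [:: -1; 0; 1; 0; 1; 0; 0; 1] ].

Definition fcoef (i k : nat) : R := (nth 0 (nth [::] fcoef2 i) k)%:~R / 2%:R.

Definition Fmx : 'M[R]_8 := \matrix_(i, k) fcoef i k.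

Definition OZ (v : 'rV[R]_8) : Prop :=
  exists n : 'I_8 -> int, v = \sum_i (n i)%:~R *: row i Fmx.

(* ---------- V = R^12, basis h_1..h_4, e_0..e_7 (coordinates 0..3, 4..11) ---------- *)
(* rows: h_1..h_4, f_0..f_7 *)
Definition LBmx : 'M[R]_12 :=
  \matrix_(i, j) (if (i < 4)%N then ((i : nat) == j)%:R
                  else if (j < 4)%N then 0 else fcoef (i - 4) (j - 4)).

Definition II210 (x : 'rV[R]_12) : Prop :=
  exists n : 'I_12 -> int, x = \sum_i (n i)%:~R *: row i LBmx.

Definition mx_mul (A B : 'M[cl]_4) : 'M[cl]_4 :=
  \matrix_(i, j) \sum_(k : 'I_4) cl_mul (A i k) (B k j).
Definition mx_one : 'M[cl]_4 := \matrix_(i, j) (if i == j then cl_one else 0).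
Definition mx_scale (c : R) (A : 'M[cl]_4) : 'M[cl]_4 := map_mx (cl_scale c) A.

(* (a,b) entry (0-based) of iota(b_i), b_0..b_3 = h_1..h_4, b_4..b_11 = e_0..e_7 *)
Definition iota_entry (i a b : nat) : cl :=
  let e0 := cl_gen 0 in
  match i with
  | 0 => if ((a == 0)%N && (b == 1)%N) || ((a == 3)%N && (b == 2)%N) then e0 else 0
  | 1 => if ((a == 1)%N && (b == 0)%N) || ((a == 2)%N && (b == 3)%N) then - e0 else 0
  | 2 => if (a == 0)%N && (b == 3)%N then e0
         else if (a == 1)%N && (b == 2)%N then - e0 else 0
  | 3 => if (a == 2)%N && (b == 1)%N then e0
         else if (a == 3)%N && (b == 0)%N then - e0 else 0
  | 4 => if a == b then (if odd a then e0 else - e0) else 0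
  | _ => if a == b then cl_gen (i - 4)%N else 0
  end.

Definition iota_gen (i : 'I_12) : 'M[cl]_4 := \matrix_(a, b) iota_entry i a b.

(* iota restricted to V (it determines the algebra map iota on C(V)) *)
Definition iotaV (x : 'rV[R]_12) : 'M[cl]_4 := \sum_i mx_scale (x 0 i) (iota_gen i).

End Cliff.

Inductive subring_gen {T : Type} (one : T) (add mul : T -> T -> T) (opp : T -> T)
    (S : T -> Prop) : T -> Prop :=
  | sg_base x : S x -> subring_gen one add mul opp S x
  | sg_one : subring_gen one add mul opp S one
  | sg_add x y : subring_gen one add mul opp S x -> subring_gen one add mul opp S y ->
                 subring_gen one add mul opp S (add x y)
  | sg_opp x : subring_gen one add mul opp S x -> subring_gen one add mul opp S (opp x)
  | sg_mul x y : subring_gen one add mul opp S x -> subring_gen one add mul opp S y ->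
                 subring_gen one add mul opp S (mul x y).

Definition Cplus_OZ (R : realFieldType) : cl R -> Prop :=
  subring_gen (cl_one R) +%R (@cl_mul R) -%R
    (fun z => exists a b, OZ a /\ OZ b /\ z = cl_mul (cl_vec a) (cl_vec b)).

(* iota(C^+(II_{2,10})) = subring of M_4(C(V_0)) generated by iota(a) iota(b), a,b in II_{2,10} *)
Definition iota_Cplus_II (R : realFieldType) : 'M[cl R]_4 -> Prop :=
  subring_gen (mx_one R) +%R (@mx_mul R) -%R
    (fun Z => exists x y, II210 x /\ II210 y /\ Z = mx_mul (iotaV x) (iotaV y)).

From HB Require Import structures.
From mathcomp Require Import all_boot all_order all_algebra.
From mathcomp Require Import ring.
Set Implicit Arguments. Unset Strict Implicit. Unset Printing Implicit Defensive.
Import Order.TTheory GRing.Theory Num.Theory.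
Local Open Scope ring_scope.

(* The entry (a, b) of iota(x), x in V, is the image in C(V_0) of a vector of V_0:
   off the diagonal an integral combination of the h-coordinates of x times e_0, on
   the diagonal the e-part of x, with its e_0-coordinate negated in rows 0 and 2 (rows
   numbered from 0).  For x in II_{2,10} these vectors lie in -O(Z): the reflection
   preserves O(Z) since f_0 = e_0 and twice an e_0-coordinate in O(Z) is an integer.
   Hence the entries of iota(a) iota(b) lie in C^+(-O(Z)), and this passes to the
   ring they generate.
   Conversely, products of the iota(h_i) and iota(e_0) yield every matrix unit E_ij,
   and for a, b in -O(Z) placed in V with zero h-part, E_11 iota(a) iota(b) E_11 is
   E_11 ab.  So E_ij ab = E_i1 (E_11 iota(a) iota(b) E_11) E_1j is in the image, and
   then so is E_ij c for every c in C^+(-O(Z)).  The Clifford product is never shown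
   to be associative: all products are bracketed as they are generated. *)

Local Notation o n := (@Ordinal 4 n isT).

Section CliffordProduct.
Variable R : realFieldType.
Implicit Types x y z : cl R.

Lemma cl_mul0l z : cl_mul 0 z = 0.
Proof.
apply/ffunP=> U; rewrite !ffunE big1 // => S _; rewrite big1 // => T _.
by rewrite ffunE mulr0 mul0r.
Qed.

Lemma cl_mul0r z : cl_mul z 0 = 0.
Proof.
apply/ffunP=> U; rewrite !ffunE big1 // => S _; rewrite big1 // => T _.
by rewrite ffunE mulr0.
Qed.

Lemma cl_mulNl x z : cl_mul (- x) z = - cl_mul x z.
Proof.
apply/ffunP=> U; rewrite !ffunE -sumrN; apply: eq_bigr => S _.
by rewrite -sumrN; apply: eq_bigr => T _; rewrite !ffunE mulrN mulNr.
Qed.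

Lemma cl_mulNr x z : cl_mul x (- z) = - cl_mul x z.
Proof.
apply/ffunP=> U; rewrite !ffunE -sumrN; apply: eq_bigr => S _.
by rewrite -sumrN; apply: eq_bigr => T _; rewrite !ffunE mulrN.
Qed.

Lemma cl_mulDl x y z : cl_mul (x + y) z = cl_mul x z + cl_mul y z.
Proof.
apply/ffunP=> U; rewrite !ffunE -big_split; apply: eq_bigr => S _.
by rewrite -big_split; apply: eq_bigr => T _; rewrite !ffunE mulrDr mulrDl.
Qed.

Lemma cl_mulDr x y z : cl_mul x (y + z) = cl_mul x y + cl_mul x z.
Proof.
apply/ffunP=> U; rewrite !ffunE -big_split; apply: eq_bigr => S _.
by rewrite -big_split; apply: eq_bigr => T _; rewrite !ffunE mulrDr.
Qed.
Lemma cl_sign0l T : cl_sign R set0 T = 1.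
Proof.
rewrite /cl_sign set0I cards0 addn0 -(expr0 (-1 : R)); congr (_ ^+ _).
by apply/eqP; rewrite cards_eq0; apply/eqP/setP => p; rewrite !inE.
Qed.

Lemma cl_sign0r S : cl_sign R S set0 = 1.
Proof.
rewrite /cl_sign setI0 cards0 addn0 -(expr0 (-1 : R)); congr (_ ^+ _).
by apply/eqP; rewrite cards_eq0; apply/eqP/setP => p; rewrite !inE andbF.
Qed.

Lemma cl_mul1l x : cl_mul (cl_one R) x = x.
Proof.
apply/ffunP=> U; rewrite !ffunE (bigD1 set0) //= [X in _ + X = _]big1 ?addr0; last first.
  by move=> S /negbTE nS; rewrite big1 // => T _; rewrite ffunE nS mulr0 mul0r.
rewrite (big_pred1 U); last by move=> T; rewrite set0D setD0 set0U.
by rewrite ffunE eqxx cl_sign0l !mul1r.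
Qed.

Lemma cl_mul1r x : cl_mul x (cl_one R) = x.
Proof.
apply/ffunP=> U; rewrite !ffunE (bigD1 U) //= [X in _ + X = _]big1 ?addr0; last first.
  move=> S SU; rewrite big1 // => T /eqP TU; rewrite ffunE.
  case: eqP => [T0|]; last by rewrite mulr0.
  by move: TU SU; rewrite T0 setD0 set0D setU0 => ->; rewrite eqxx.
rewrite (bigD1 set0) /=; last by rewrite setD0 set0D setU0.
rewrite [X in _ + X = _]big1 ?addr0; last by move=> T /andP[_ /negbTE nT]; rewrite ffunE nT mulr0.
by rewrite ffunE eqxx cl_sign0r !mulr1 mul1r.
Qed.

Definition cl_basis (S0 : {set 'I_8}) : cl R := [ffun U => (U == S0)%:R].

Lemma cl_mul_basis S0 T0 :
  cl_mul (cl_basis S0) (cl_basis T0) =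
  [ffun U => cl_sign R S0 T0 * (U == (S0 :\: T0) :|: (T0 :\: S0))%:R].
Proof.
apply/ffunP=> U; rewrite !ffunE (bigD1 S0) //= [X in _ + X = _]big1 ?addr0; last first.
  by move=> S /negbTE nS; rewrite big1 // => T _; rewrite ffunE nS mulr0 mul0r.
rewrite big_mkcond (bigD1 T0) //= [X in _ + X = _]big1 ?addr0; last first.
  by move=> T /negbTE nT; rewrite !ffunE nT mulr0; case: ifP.
by rewrite !ffunE !eqxx !mulr1 eq_sym; case: ifP; rewrite ?mulr0 ?mulr1.
Qed.

Lemma cl_gen_sqr k : cl_mul (cl_gen R k) (cl_gen R k) = - cl_one R.
Proof.
set s : {set 'I_8} := [set inord k].
have sign_ss : cl_sign R s s = -1.
  rewrite /cl_sign setIid cards1 -(expr1 (-1 : R)); congr (_ ^+ _); apply/eqP.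
  rewrite addn1 eqSS cards_eq0; apply/eqP/setP => -[a b]; rewrite !inE /=.
  by apply/and3P => -[/eqP -> /eqP ->]; rewrite ltnn.
rewrite [cl_gen R k]/(cl_basis s) cl_mul_basis setDv setU0 sign_ss.
by apply/ffunP => U; rewrite !ffunE mulN1r.
Qed.

End CliffordProduct.

Section SubringGen.
Variables (T : zmodType) (one : T) (mul : T -> T -> T) (S : T -> Prop).
Local Notation gen := (subring_gen one +%R mul -%R S).

Lemma subring_gen0 : gen 0.
Proof. by rewrite -(subrr one); apply: sg_add; [apply: sg_one | apply/sg_opp/sg_one]. Qed.

Lemma subring_gen_sum (I : finType) (F : I -> T) :
  (forall i, gen (F i)) -> gen (\sum_i F i).
Proof. by move=> genF; apply: big_ind => //; [exact: subring_gen0 | exact: sg_add]. Qed.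

End SubringGen.

Section Lattices.
Variable R : realFieldType.
Local Notation F := (Fmx R).

Lemma fcoef0 k : fcoef R 0 k = (k == 0)%:R.
Proof.
rewrite /fcoef; case: k => [|k]; first by rewrite /= divff // pnatr_eq0.
by do 7 (case: k => [|k]; first by rewrite /= mul0r); rewrite nth_default ?mul0r.
Qed.

Lemma LBmx_block : LBmx R = block_mx 1%:M 0 0 F :> 'M_(4 + 8).
Proof.
apply/matrixP => i j; rewrite -(splitK i) -(splitK j).
case: (split i) => a; case: (split j) => b; rewrite /= mxE /= ?ltn_ord.
- by rewrite block_mxEul mxE.
- rewrite block_mxEur mxE; case: eqP => // ab.
  by have := ltn_ord a; rewrite ab ltnNge leq_addr.
- by rewrite block_mxEdl mxE.
- by rewrite block_mxEdr mxE !addKn.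
Qed.

Lemma int_comb_rows k m (n : 'I_k -> int) (M : 'M[R]_(k, m)) :
  \sum_i (n i)%:~R *: row i M = (\row_i (n i)%:~R) *m M.
Proof. by rewrite mulmx_sum_row; apply: eq_bigr => i _; rewrite mxE. Qed.

Lemma row_mx_mul_LBmx (u : 'rV[R]_4) (v : 'rV[R]_8) :
  (row_mx u v : 'rV_12) *m LBmx R = row_mx u (v *m F).
Proof.
have := mul_row_block u v 1%:M 0 0 F.
by rewrite !mulmx0 mulmx1 addr0 add0r -LBmx_block.
Qed.

Definition h_part (x : 'rV[R]_12) : 'rV[R]_4 := lsubmx (x : 'M_(1, 4 + 8)).
Definition e_part (x : 'rV[R]_12) : 'rV[R]_8 := rsubmx (x : 'M_(1, 4 + 8)).

Lemma II210P x :
  II210 x <-> (exists n : 'I_4 -> int, h_part x = \row_i (n i)%:~R) /\ OZ (e_part x).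
Proof.
rewrite /II210 /OZ; split.
- case=> n; rewrite int_comb_rows -[\row_i _](@hsubmxK _ 1 4 8) row_mx_mul_LBmx => ->.
  rewrite /h_part /e_part row_mxKl row_mxKr.
  split; first by exists (fun i : 'I_4 => n (lshift 8 i)); apply/rowP => i; rewrite !mxE.
  exists (fun i : 'I_8 => n (rshift 4 i)); rewrite int_comb_rows.
  by congr (_ *m _); apply/rowP => i; rewrite !mxE.
- case=> -[nl Enl] [nr Enr].
  pose n j := match split j with inl a => nl a | inr b => nr b end; exists n.
  rewrite int_comb_rows -[x](@hsubmxK _ 1 4 8) -/(h_part x) -/(e_part x) Enl Enr.
  rewrite int_comb_rows -[\row_i _ in RHS](@hsubmxK _ 1 4 8) row_mx_mul_LBmx.
  by f_equal; [|f_equal]; apply/rowP => i;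
    rewrite !mxE /n ?(unsplitK (inl _)) ?(unsplitK (inr _)).
Qed.

Lemma row0_Fmx : row 0 F = delta_mx 0 0.
Proof. by apply/rowP => k; rewrite !mxE fcoef0 -val_eqE. Qed.

Lemma OZ_e0 (z : int) : OZ (z%:~R *: delta_mx 0 0 : 'rV[R]_8).
Proof.
exists (fun i => if i == 0 then z else 0); rewrite (bigD1 0) //= big1 ?addr0.
  by rewrite row0_Fmx.
by move=> i /negbTE ->; rewrite scale0r.
Qed.

Definition refl_e0 (v : 'rV[R]_8) : 'rV[R]_8 :=
  \row_k ((if k == 0 :> nat then -1 else 1) * v 0 k).

(* Reflecting in [e_0] subtracts [2 v_0 e_0 = 2 v_0 f_0], and [2 v_0] is an integer. *)
Lemma OZ_refl_e0 v : OZ v -> OZ (refl_e0 v).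
Proof.
case=> n ->.
pose m : int := \sum_i n i * nth 0 (nth [::] fcoef2 i) 0.
exists (fun i => n i - (i == 0)%:Z * m).
apply/rowP => k; rewrite !mxE !summxE.
have Em : m%:~R = 2%:R * \sum_i (n i)%:~R * fcoef R i 0 :> R.
  rewrite /m rmorph_sum mulr_sumr; apply: eq_bigr => i _.
  by rewrite rmorphM /= /fcoef; field.
under [RHS]eq_bigr => i _ do rewrite rmorphB rmorphM /= !mxE mulrBl.
rewrite sumrB [X in _ - X](bigD1 0) //= [X in _ - (_ + X)]big1 ?addr0; last first.
  by move=> i /negbTE ->; rewrite !mul0r.
rewrite fcoef0 mulr1z mul1r.
case: (k =P 0 :> nat) => [k0|_]; last first.
  by rewrite mul1r mulr0n mulr0 subr0; apply: eq_bigr => i _; rewrite !mxE.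
rewrite k0 /= Em (_ : k = 0); last exact/val_inj.
under eq_bigr => i _ do rewrite !mxE.
set V := \sum_i _; ring.
Qed.

End Lattices.

Definition h_coef (i a b : nat) : int :=
  match i with
  | 0 => if ((a == 0) && (b == 1)) || ((a == 3) && (b == 2)) then 1 else 0
  | 1 => if ((a == 1) && (b == 0)) || ((a == 2) && (b == 3)) then -1 else 0
  | 2 => if (a == 0) && (b == 3) then 1 else if (a == 1) && (b == 2) then -1 else 0
  | 3 => if (a == 2) && (b == 1) then 1 else if (a == 3) && (b == 0) then -1 else 0
  | _ => 0
  end.

Section IotaEntries.
Variable R : realFieldType.
Local Notation cl := (cl R).
Local Notation cl_e0 := (cl_gen R 0).
Implicit Types (x : 'rV[R]_12) (a b : 'I_4).

Lemma iota_entry_h (i : 'I_4) a b S :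
  iota_entry R (lshift 8 i) a b S = (h_coef i a b)%:~R * cl_e0 S.
Proof.
case: i => -[|[|[|[|i]]]] //= _; repeat case: ifP => _; rewrite ?ffunE ?mul1r ?mul0r //.
all: by rewrite mulN1r.
Qed.

Lemma h_coef_diag (i : 'I_4) a : h_coef i a a = 0.
Proof. by case: i => -[|[|[|[|i]]]] //; case: a => -[|[|[|[|a]]]]. Qed.

Definition iota_vec x a b : 'rV[R]_8 :=
  if a == b then (if odd a then e_part x else refl_e0 (e_part x))
  else (\sum_i h_part x 0 i * (h_coef i a b)%:~R) *: delta_mx 0 0.

Lemma iotaV_entry x a b : iotaV x a b = cl_vec (iota_vec x a b).
Proof.
have inord0 : inord 0 = 0 :> 'I_8 by apply/val_inj; rewrite /= inordK.
apply/ffunP => S; rewrite /iotaV summxE sum_ffunE ffunE.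
under eq_bigr => i _ do rewrite !mxE ffunE.
rewrite (@big_split_ord _ 0 +%R 4 8 xpredT) /= [X in _ + X]big_ord_recl.
under eq_bigr => i _ do rewrite iota_entry_h.
under [X in _ + (_ + X) = _]eq_bigr => i _ do rewrite /= addKn /bump leq0n add1n.
rewrite /iota_vec -val_eqE /=.
case: eqP => [<-|ab].
  rewrite ?eqxx big1 ?add0r; last by move=> i _; rewrite h_coef_diag mul0r mulr0.
  rewrite [in RHS]big_ord_recl; congr (_ + _).
    case: (odd a); rewrite !mxE ?ffunE inord0 /=; case: (S == _);
    by rewrite ?mulr1n ?mulr0n ?mulrN ?mulr1 ?mulr0 ?mul1r ?mulN1r ?oppr0.
  apply: eq_bigr => i _; rewrite ffunE.
  have -> : inord i.+1 = lift ord0 i :> 'I_8 by apply/val_inj; rewrite /= inordK // ltnS.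
  by case: (odd a); rewrite !mxE /= ?mul1r; case: (S == _); rewrite ?mulr1 ?mulr0.
have zeroS : (0 : cl) S = 0 by rewrite ffunE.
rewrite zeroS mulr0 add0r [X in _ + X = _]big1 ?addr0; last by move=> i _; rewrite mulr0.
rewrite [in RHS]big_ord_recl [X in _ = _ + X]big1 ?addr0; last first.
  by move=> i _; rewrite !mxE /= mulr0; case: ifP.
under eq_bigr => i _ do rewrite mulrA.
rewrite -mulr_suml !mxE /= ffunE inord0.
under [in RHS]eq_bigr => i _ do rewrite mxE.
by case: (S == _); rewrite ?mulr1n ?mulr0n ?mulr1 ?mulr0.
Qed.

Lemma iota_vec_OZ x a b : II210 x -> OZ (iota_vec x a b).
Proof.
case/II210P=> -[n En] Ex; rewrite /iota_vec; case: eqP => _.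
  by case: (odd a) => //; apply: OZ_refl_e0.
under eq_bigr => i _ do rewrite En mxE -rmorphM.
by rewrite -rmorph_sum; apply: OZ_e0.
Qed.

End IotaEntries.

Lemma ord4_ind (P : 'I_4 -> Prop) : P (o 0) -> P (o 1) -> P (o 2) -> P (o 3) -> forall i, P i.
Proof. by move=> ? ? ? ? [[|[|[|[|//]]]] lt_i4]; rewrite (bool_irrelevance lt_i4 isT). Qed.

Section MatrixUnits.
Variable R : realFieldType.
Local Notation cl := (cl R).
Implicit Types (c d : cl) (A B C : 'M[cl]_4).

Definition elem_mx (i j : 'I_4) c : 'M[cl]_4 :=
  \matrix_(a, b) if (a == i) && (b == j) then c else 0.

Lemma mx_mulDl A B C : mx_mul (A + B) C = mx_mul A C + mx_mul B C.
Proof.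
by apply/matrixP => a b; rewrite !mxE -big_split; apply: eq_bigr => k _; rewrite mxE cl_mulDl.
Qed.

Lemma mx_mulDr A B C : mx_mul A (B + C) = mx_mul A B + mx_mul A C.
Proof.
by apply/matrixP => a b; rewrite !mxE -big_split; apply: eq_bigr => k _; rewrite mxE cl_mulDr.
Qed.

Lemma elem_mx_mul i k l j c d :
  mx_mul (elem_mx i k c) (elem_mx l j d) =
  if k == l then elem_mx i j (cl_mul c d) else 0.
Proof.
apply/matrixP => a b; case: eqP => [<-|/eqP kl].
  rewrite !mxE (bigD1 k) //= [X in _ + X = _]big1 ?addr0.
    by rewrite !mxE !eqxx andbT; case: (a == i); case: (b == j); rewrite ?cl_mul0l ?cl_mul0r.
  by move=> m /negbTE mk; rewrite !mxE mk andbF cl_mul0l.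
rewrite !mxE big1 // => m _; rewrite !mxE.
case: ifP => [/andP[_ /eqP mk]|_]; last by rewrite cl_mul0l.
case: ifP => [/andP[/eqP ml _]|_]; last by rewrite cl_mul0r.
by move: kl; rewrite -mk ml eqxx.
Qed.

Lemma elem_mxD i j c d : elem_mx i j c + elem_mx i j d = elem_mx i j (c + d).
Proof. by apply/matrixP => a b; rewrite !mxE; case: ifP; rewrite ?addr0. Qed.

Lemma elem_mxN i j c : - elem_mx i j c = elem_mx i j (- c).
Proof. by apply/matrixP => a b; rewrite !mxE; case: ifP; rewrite ?oppr0. Qed.

Lemma sum_elem_mx A : \sum_i \sum_j elem_mx i j (A i j) = A.
Proof.
apply/matrixP => a b; rewrite summxE (bigD1 a) //= [X in _ + X]big1 ?addr0 => [|i ia].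
  rewrite summxE (bigD1 b) //= [X in _ + X]big1 ?addr0 => [|j jb]; first by rewrite mxE !eqxx.
  by rewrite mxE (eq_sym b) (negbTE jb) andbF.
by rewrite summxE big1 // => j _; rewrite mxE (eq_sym a) (negbTE ia).
Qed.

Lemma elem_mx_sandwich i j A :
  mx_mul (elem_mx i i (cl_one R)) (mx_mul A (elem_mx j j (cl_one R))) = elem_mx i j (A i j).
Proof.
apply/matrixP => a b; rewrite !mxE (bigD1 i) //= big1 ?addr0; last first.
  by move=> k /negbTE ki; rewrite mxE ki andbF cl_mul0l.
rewrite !mxE eqxx andbT; case: (a == i); last by rewrite cl_mul0l.
rewrite cl_mul1l (bigD1 j) //= big1 ?addr0; last first.
  by move=> k /negbTE kj; rewrite mxE kj cl_mul0r.
by rewrite mxE eqxx andbC; case: (b == j); rewrite ?cl_mul1r ?cl_mul0r.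
Qed.

End MatrixUnits.

Section Image.
Variable R : realFieldType.
Local Notation cl := (cl R).
Local Notation c1 := (cl_one R).
Local Notation cl_e0 := (cl_gen R 0).
Local Notation img := (@iota_Cplus_II R).
Local Notation ig := (iota_gen R).
Local Notation h1 := (@Ordinal 12 0 isT).
Local Notation h2 := (@Ordinal 12 1 isT).
Local Notation h3 := (@Ordinal 12 2 isT).
Local Notation h4 := (@Ordinal 12 3 isT).
Local Notation e0 := (@Ordinal 12 4 isT).

Lemma row_LBmx_delta (j : 'I_12) : (j < 5)%N -> row j (LBmx R) = delta_mx 0 j.
Proof.
move=> j5; apply/rowP => c; rewrite !mxE eqxx /= -val_eqE /=.
case: ifP => j4; first by rewrite eq_sym.
have -> : (j : nat) = 4%N by apply/eqP; rewrite eqn_leq -ltnS j5 leqNgt j4.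
case: ifP => c4; first by case: eqP c4 => // ->.
by rewrite fcoef0 subn_eq0 eqn_leq (leqNgt 4) c4 andbT.
Qed.

Lemma iotaV_delta (j : 'I_12) : iotaV (delta_mx 0 j : 'rV[R]_12) = ig j.
Proof.
rewrite /iotaV (bigD1 j) //= big1 ?addr0 => [|i /negbTE ij].
  by apply/matrixP => a b; rewrite !mxE; apply/ffunP => S; rewrite ffunE !eqxx mul1r.
by apply/matrixP => a b; rewrite !mxE ij; apply/ffunP => S; rewrite !ffunE mul0r.
Qed.

Lemma iota_gen_mul_in_image (j k : 'I_12) :
  (j < 5)%N -> (k < 5)%N -> img (mx_mul (ig j) (ig k)).
Proof.
have II210_delta (l : 'I_12) : (l < 5)%N -> II210 (delta_mx 0 l : 'rV[R]_12).
  move=> l5; rewrite -(row_LBmx_delta l5); exists (fun i => (i == l)%:Z).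
  rewrite (bigD1 l) //= big1 ?addr0 => [|i /negbTE il]; first by rewrite eqxx scale1r.
  by rewrite il scale0r.
move=> j5 k5; apply: sg_base; exists (delta_mx 0 j), (delta_mx 0 k).
by rewrite !iotaV_delta; split; [|split]; try exact: II210_delta.
Qed.

Lemma iota_gen_h1 : ig h1 = elem_mx (o 0) (o 1) cl_e0 + elem_mx (o 3) (o 2) cl_e0.
Proof. by apply/matrixP; elim/ord4_ind; elim/ord4_ind; rewrite !mxE /= ?addr0 ?add0r. Qed.

Lemma iota_gen_h2 : ig h2 = elem_mx (o 1) (o 0) (- cl_e0) + elem_mx (o 2) (o 3) (- cl_e0).
Proof. by apply/matrixP; elim/ord4_ind; elim/ord4_ind; rewrite !mxE /= ?addr0 ?add0r. Qed.

Lemma iota_gen_h3 : ig h3 = elem_mx (o 0) (o 3) cl_e0 + elem_mx (o 1) (o 2) (- cl_e0).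
Proof. by apply/matrixP; elim/ord4_ind; elim/ord4_ind; rewrite !mxE /= ?addr0 ?add0r. Qed.

Lemma iota_gen_h4 : ig h4 = elem_mx (o 2) (o 1) cl_e0 + elem_mx (o 3) (o 0) (- cl_e0).
Proof. by apply/matrixP; elim/ord4_ind; elim/ord4_ind; rewrite !mxE /= ?addr0 ?add0r. Qed.

Lemma iota_gen_e0 : ig e0 = elem_mx (o 0) (o 0) (- cl_e0) + elem_mx (o 1) (o 1) cl_e0
                          + elem_mx (o 2) (o 2) (- cl_e0) + elem_mx (o 3) (o 3) cl_e0.
Proof. by apply/matrixP; elim/ord4_ind; elim/ord4_ind; rewrite !mxE /= ?addr0 ?add0r. Qed.

Ltac elem_mx_simpl :=
  rewrite !(mx_mulDl, mx_mulDr) !elem_mx_mul /= ?(cl_mulNl, cl_mulNr) ?cl_gen_sqr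
          ?opprK ?cl_mul1l ?addr0 ?add0r.

Lemma elem_mx_diag_in_image i : img (elem_mx i i c1).
Proof.
have h12 : mx_mul (ig h1) (ig h2) = elem_mx (o 0) (o 0) c1 + elem_mx (o 3) (o 3) c1.
  by rewrite iota_gen_h1 iota_gen_h2; elem_mx_simpl.
have h21 : mx_mul (ig h2) (ig h1) = elem_mx (o 1) (o 1) c1 + elem_mx (o 2) (o 2) c1.
  by rewrite iota_gen_h1 iota_gen_h2; elem_mx_simpl.
have h34 : mx_mul (ig h3) (ig h4) = elem_mx (o 0) (o 0) c1 + elem_mx (o 1) (o 1) c1.
  by rewrite iota_gen_h3 iota_gen_h4; elem_mx_simpl.
have h43 : mx_mul (ig h4) (ig h3) = elem_mx (o 2) (o 2) c1 + elem_mx (o 3) (o 3) c1.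
  by rewrite iota_gen_h3 iota_gen_h4; elem_mx_simpl.
have gen_quad (j k l m : 'I_12) : (j < 5)%N -> (k < 5)%N -> (l < 5)%N -> (m < 5)%N ->
    img (mx_mul (mx_mul (ig j) (ig k)) (mx_mul (ig l) (ig m))).
  by move=> *; apply: sg_mul; apply: iota_gen_mul_in_image.
elim/ord4_ind: i.
- by have := gen_quad h1 h2 h3 h4 isT isT isT isT; rewrite h12 h34; elem_mx_simpl.
- by have := gen_quad h2 h1 h3 h4 isT isT isT isT; rewrite h21 h34; elem_mx_simpl.
- by have := gen_quad h2 h1 h4 h3 isT isT isT isT; rewrite h21 h43; elem_mx_simpl.
- by have := gen_quad h1 h2 h4 h3 isT isT isT isT; rewrite h12 h43; elem_mx_simpl.
Qed.

Lemma elem_mx_of_entry_in_image i j A : img A -> img (elem_mx i j (A i j)).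
Proof.
move=> imgA; rewrite -elem_mx_sandwich.
apply: sg_mul; first exact: elem_mx_diag_in_image.
by apply: sg_mul; last exact: elem_mx_diag_in_image.
Qed.

Lemma elem_mx_one_in_image i j : img (elem_mx i j c1).
Proof.
have via_entry k l (a b : 'I_12) : (a < 5)%N -> (b < 5)%N ->
    (mx_mul (ig a) (ig b) k l = c1 \/ mx_mul (ig a) (ig b) k l = - c1) ->
    img (elem_mx k l c1).
  move=> a5 b5 [E|E]; first by rewrite -E; apply/elem_mx_of_entry_in_image/iota_gen_mul_in_image.
  rewrite -[c1]opprK -elem_mxN -E; apply/sg_opp/elem_mx_of_entry_in_image.
  exact: iota_gen_mul_in_image.
have col1 k : img (elem_mx k (o 1) c1).
  elim/ord4_ind: k.
  - apply: (via_entry _ _ h1 e0) => //; right.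
    by rewrite iota_gen_h1 iota_gen_e0; elem_mx_simpl; rewrite !mxE /= ?addr0 ?add0r.
  - exact: elem_mx_diag_in_image.
  - apply: (via_entry _ _ h4 e0) => //; right.
    by rewrite iota_gen_h4 iota_gen_e0; elem_mx_simpl; rewrite !mxE /= ?addr0 ?add0r.
  - apply: (via_entry _ _ h4 h1) => //; left.
    by rewrite iota_gen_h4 iota_gen_h1; elem_mx_simpl; rewrite !mxE /= ?addr0 ?add0r.
have row1 l : img (elem_mx (o 1) l c1).
  elim/ord4_ind: l.
  - apply: (via_entry _ _ h2 e0) => //; right.
    by rewrite iota_gen_h2 iota_gen_e0; elem_mx_simpl; rewrite !mxE /= ?addr0 ?add0r.
  - exact: elem_mx_diag_in_image.
  - apply: (via_entry _ _ h3 e0) => //; right.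
    by rewrite iota_gen_h3 iota_gen_e0; elem_mx_simpl; rewrite !mxE /= ?addr0 ?add0r.
  - apply: (via_entry _ _ h2 h3) => //; left.
    by rewrite iota_gen_h2 iota_gen_h3; elem_mx_simpl; rewrite !mxE /= ?addr0 ?add0r.
have -> : elem_mx i j c1 = mx_mul (elem_mx i (o 1) c1) (elem_mx (o 1) j c1).
  by rewrite elem_mx_mul eqxx cl_mul1l.
exact: sg_mul (col1 i) (row1 j).
Qed.

End Image.

Section Embedding.
Variable R : realFieldType.
Implicit Type v : 'rV[R]_8.

Lemma cl_vec0 : cl_vec (0 : 'rV[R]_8) = 0.
Proof. by apply/ffunP => S; rewrite !ffunE big1 // => k _; rewrite mxE; case: ifP. Qed.

Lemma II210_row_mx0 v : OZ v -> II210 (row_mx (0 : 'rV_4) v : 'rV_12).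
Proof.
move=> OZv; apply/II210P; rewrite /h_part /e_part row_mxKl row_mxKr; split=> //.
by exists (fun=> 0); apply/rowP => i; rewrite !mxE.
Qed.

Lemma iotaV_row_mx0 v a b :
  iotaV (row_mx (0 : 'rV_4) v : 'rV_12) a b =
  if a == b then cl_vec (if odd a then v else refl_e0 v) else 0.
Proof.
rewrite iotaV_entry /iota_vec /h_part /e_part row_mxKl row_mxKr; case: eqP => // _.
by rewrite big1 ?scale0r ?cl_vec0 // => i _; rewrite mxE mul0r.
Qed.

End Embedding.

Section Main.
Variable R : realFieldType.
Local Notation c1 := (cl_one R).
Local Notation img := (@iota_Cplus_II R).

Lemma image_entry_Cplus_OZ A : img A -> forall i j, Cplus_OZ (A i j).
Proof.
elim=> {A} [_ [x [y [IIx [IIy ->]]]] | | A B _ IHA _ IHB | A _ IHA | A B _ IHA _ IHB] i j;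
  rewrite mxE.
- apply: subring_gen_sum => k; apply: sg_base; rewrite !iotaV_entry.
  by exists (iota_vec x i k), (iota_vec y k j); split; [|split]; try exact: iota_vec_OZ.
- by case: ifP => _; [apply: sg_one | apply: subring_gen0].
- exact: sg_add (IHA i j) (IHB i j).
- exact: sg_opp (IHA i j).
- by apply: subring_gen_sum => k; apply: sg_mul (IHA i k) (IHB k j).
Qed.

Lemma elem_mx_Cplus_OZ_in_image c : Cplus_OZ c -> forall i j, img (elem_mx i j c).
Proof.
have through1 i j c' d :
    elem_mx i j (cl_mul c' d) = mx_mul (elem_mx i (o 1) c') (elem_mx (o 1) j d).
  by rewrite elem_mx_mul eqxx.
elim=> {c} [_ [a [b [OZa [OZb ->]]]] | | c d _ IHc _ IHd | c _ IHc | c d _ IHc _ IHd] i j.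
- pose x := row_mx (0 : 'rV_4) a : 'rV_12; pose y := row_mx (0 : 'rV_4) b : 'rV_12.
  have xy11 : mx_mul (iotaV x) (iotaV y) (o 1) (o 1) = cl_mul (cl_vec a) (cl_vec b).
    rewrite mxE (bigD1 (o 1)) //= big1 ?addr0 => [|k /negbTE k1].
      by rewrite !iotaV_row_mx0.
    by rewrite iotaV_row_mx0 eq_sym k1 cl_mul0l.
  have E11 : img (elem_mx (o 1) (o 1) (cl_mul (cl_vec a) (cl_vec b))).
    rewrite -xy11; apply/elem_mx_of_entry_in_image/sg_base.
    by exists x, y; split; [|split]; try exact: II210_row_mx0.
  rewrite -[cl_mul _ _]cl_mul1l through1 -[cl_mul _ _]cl_mul1r through1.
  by apply: sg_mul (elem_mx_one_in_image _ _ _) (sg_mul E11 (elem_mx_one_in_image _ _ _)).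
- exact: elem_mx_one_in_image.
- by rewrite -elem_mxD; apply: sg_add (IHc i j) (IHd i j).
- by rewrite -elem_mxN; apply: sg_opp (IHc i j).
- by rewrite through1; apply: sg_mul (IHc i _) (IHd _ j).
Qed.

End Main.

Theorem lemma5p1 (R : realFieldType) (A : 'M[cl R]_4) :
  iota_Cplus_II A <-> (forall i j, Cplus_OZ (A i j)).
Proof.
split; first exact: image_entry_Cplus_OZ.
move=> entries; rewrite -(sum_elem_mx A).
by do 2 apply: subring_gen_sum => ?; apply: elem_mx_Cplus_OZ_in_image.
Qed.
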